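(* Let $m\ge 2$ be an integer. Then, as formal power series in $q$ (equivalently, for $|q|<1$), $$\sum_{n=1}^\infty \frac{q^n\left(1-q^{(m-1)n}\right)(q^{mn};q^m)_\infty}{(1-q^n)\,(q^{n+1};q)_{(m-1)n}\,(q^{mn};q)_\infty} = -1 + \frac{(q^m;q^m)_\infty}{(q;q)_\infty}.$$
   Context: Standard $q$-Pochhammer notation: $(a;q)_n=(1-a)(1-aq)\cdots(1-aq^{n-1})$ and $(a;q)_\infty=\prod_{k=0}^\infty(1-aq^k)$. *)

From Stdlib Require Import Reals.
From Coquelicot Require Import Coquelicot.

Fixpoint qpoch (a q : C) (n : nat) : C :=
  match n with
  | O => 1%C
  | S k => Cmult (qpoch a q k) (Cminus 1%C (Cmult a (pow_n q k)))
  end.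

(* When the partial products converge (e.g. |q|<1)
   this is exactly their limit. *)
Definition qpinf (a q : C) : C :=
  (real (Lim_seq (fun N => fst (qpoch a q N))),
   real (Lim_seq (fun N => snd (qpoch a q N)))).

Definition cor7_term (m : nat) (q : C) (n : nat) : C :=
  Cdiv (Cmult (Cmult (pow_n q n) (Cminus 1%C (pow_n q ((m - 1) * n))))
              (qpinf (pow_n q (m * n)) (pow_n q m)))
       (Cmult (Cmult (Cminus 1%C (pow_n q n))
                     (qpoch (pow_n q (n + 1)) q ((m - 1) * n)))
              (qpinf (pow_n q (m * n)) q)).

(* The summand telescopes.  Put P n = (q^(mn); q^m)_oo / (q^n; q)_oo ([cor7_ratio]).
   The functional equations (a;q)_oo = (1 - a) (aq;q)_oo and (a;q)_oo = (a;q)_k (aq^k;q)_oo,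
   applied to numerator and denominator, give term n = P n - P (n+1) for n >= 1.  Since
   |(a;q)_oo - 1| = O(|a|), both q-products in P n tend to 1, hence P n -> 1 and the
   series sums to P 1 - 1. *)

From Stdlib Require Import Reals Lra Lia.
From Coquelicot Require Import Coquelicot.
Open Scope C_scope.

Lemma pow_n_1 (q : C) : pow_n q 1 = q.
Proof. apply Cmult_1_r. Qed.

Lemma pow_n_add (q : C) k n : pow_n q (k + n) = pow_n q k * pow_n q n.
Proof. exact (pow_n_plus q k n). Qed.

Lemma Cmod_pow_n (q : C) n : Cmod (pow_n q n) = (Cmod q ^ n)%R.
Proof.
  induction n as [|n IH]; simpl.
  - apply Cmod_1.
  - change (mult q (pow_n q n)) with (q * pow_n q n). now rewrite Cmod_mult, IH.
Qed.

Lemma Cmod_pow_n_lt_1 (q : C) n : (Cmod q < 1)%R -> (1 <= n)%nat -> (Cmod (pow_n q n) < 1)%R.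
Proof.
  intros Hq Hn. rewrite Cmod_pow_n. apply pow_lt_1_compat; [pose proof (Cmod_ge_0 q); lra | lia].
Qed.

Lemma Cminus_1_neq_0 (x : C) : (Cmod x < 1)%R -> 1 - x <> 0.
Proof.
  intros Hx E. assert (x = 1) by (replace x with (- (1 - x) + 1) by ring; rewrite E; ring).
  subst. rewrite Cmod_1 in Hx. lra.
Qed.

Lemma pow_le_pow_of_le_1 (s : R) k n : (0 <= s <= 1)%R -> (k <= n)%nat -> (s ^ n <= s ^ k)%R.
Proof.
  intros Hs Hkn. replace n with (k + (n - k))%nat by lia. rewrite pow_add.
  pose proof (pow_le s k ltac:(lra)).
  assert (s ^ (n - k) <= 1)%R by (rewrite <- (pow1 (n - k)); apply pow_incr; lra). nra.
Qed.

Lemma exp_le_exp (x y : R) : (x <= y)%R -> (exp x <= exp y)%R.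
Proof. intros [Hlt|Heq]; [left; now apply exp_increasing | right; now rewrite Heq]. Qed.

Lemma geom_tail_lt (s c : R) (eps : posreal) : (0 <= s < 1)%R ->
  exists N, forall n, (N <= n)%nat -> (c * s ^ n < eps)%R.
Proof.
  intros Hs. set (c' := (Rabs c + 1)%R).
  assert (Hc' : (0 < c')%R) by (unfold c'; pose proof (Rabs_pos c); lra).
  destruct (pow_lt_1_zero s ltac:(rewrite Rabs_pos_eq; lra) (eps / c')%R
    (Rdiv_lt_0_compat _ _ (cond_pos eps) Hc')) as [N HN].
  exists N. intros n Hn. specialize (HN n Hn). rewrite Rabs_pos_eq in HN by (apply pow_le; lra).
  pose proof (pow_le s n ltac:(lra)). pose proof (Rle_abs c).
  apply Rle_lt_trans with (c' * s ^ n)%R; [unfold c'; nra|].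
  replace (pos eps) with (c' * (eps / c'))%R by (field; lra).
  now apply Rmult_lt_compat_l.
Qed.

Lemma filterlim_C_Cmod (u : nat -> C) (l : C) :
  filterlim u eventually (locally l) <->
  forall eps : posreal, exists N, forall n, (N <= n)%nat -> (Cmod (u n - l) < eps)%R.
Proof.
  rewrite (filterlim_locally_ball_norm (K := C_AbsRing) (U := C_NormedModule)).
  split; intros H eps; destruct (H eps) as [N HN]; exists N; intros n Hn;
    specialize (HN n Hn); unfold ball_norm in *; rewrite Cmod_norm in *; exact HN.
Qed.

Lemma filterlim_C_cauchy (u : nat -> C) :
  (forall eps : posreal, exists N, forall n p, (N <= n)%nat -> (N <= p)%nat ->
     (Cmod (u n - u p) < eps)%R) ->
  exists l, filterlim u eventually (locally l).
Proof.
  intros Hu. apply (filterlim_locally_closely (U := C_CompleteNormedModule)).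
  apply filterlim_closely.
  intros eps. destruct (Hu eps) as [N HN].
  exists (fun n => (N <= n)%nat). split; [now exists N|].
  intros n p Hn Hp. apply C_NormedModule_mixin_compat1. now apply HN.
Qed.

Lemma filterlim_C_components (u : nat -> C) (l : C) :
  filterlim u eventually (locally l) ->
  l = (real (Lim_seq (fun n => fst (u n))), real (Lim_seq (fun n => snd (u n)))).
Proof.
  rewrite filterlim_C_Cmod. intros Hu.
  assert (Hparts : forall z : C, (Rabs (fst z) <= Cmod z /\ Rabs (snd z) <= Cmod z)%R).
  { intros z. pose proof (Rmax_Cmod z). pose proof (Rmax_l (Rabs (fst z)) (Rabs (snd z))).
    pose proof (Rmax_r (Rabs (fst z)) (Rabs (snd z))). lra. }
  assert (Hfst : is_lim_seq (fun n => fst (u n)) (fst l)).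
  { apply is_lim_seq_spec. intros eps. destruct (Hu eps) as [N HN]. exists N. intros n Hn.
    eapply Rle_lt_trans; [apply (Hparts (u n - l))|]. now apply HN. }
  assert (Hsnd : is_lim_seq (fun n => snd (u n)) (snd l)).
  { apply is_lim_seq_spec. intros eps. destruct (Hu eps) as [N HN]. exists N. intros n Hn.
    eapply Rle_lt_trans; [apply (Hparts (u n - l))|]. now apply HN. }
  rewrite (is_lim_seq_unique _ _ Hfst), (is_lim_seq_unique _ _ Hsnd). now destruct l.
Qed.

Lemma filterlim_C_scal (u : nat -> C) (l c : C) :
  filterlim u eventually (locally l) ->
  filterlim (fun n => c * u n) eventually (locally (c * l)).
Proof.
  rewrite !filterlim_C_Cmod. intros Hu eps.
  assert (Hc : (0 < Cmod c + 1)%R) by (pose proof (Cmod_ge_0 c); lra).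
  destruct (Hu (mkposreal _ (Rdiv_lt_0_compat eps _ (cond_pos eps) Hc))) as [N HN].
  exists N. intros n Hn. specialize (HN n Hn). simpl in HN.
  replace (c * u n - c * l) with (c * (u n - l)) by ring. rewrite Cmod_mult.
  pose proof (Cmod_ge_0 (u n - l)).
  apply Rle_lt_trans with ((Cmod c + 1) * Cmod (u n - l))%R; [nra|].
  replace (pos eps) with ((Cmod c + 1) * (eps / (Cmod c + 1)))%R by (field; lra).
  now apply Rmult_lt_compat_l.
Qed.

Lemma filterlim_C_shift (u : nat -> C) (l : C) k :
  filterlim (fun n => u (k + n)%nat) eventually (locally l) ->
  filterlim u eventually (locally l).
Proof.
  rewrite !filterlim_C_Cmod. intros Hu eps. destruct (Hu eps) as [N HN].
  exists (k + N)%nat. intros n Hn. replace n with (k + (n - k))%nat by lia. apply HN. lia.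
Qed.

Lemma filterlim_C_Cmod_le (u : nat -> C) (l c : C) (b : R) :
  filterlim u eventually (locally l) -> (forall n, (Cmod (u n - c) <= b)%R) ->
  (Cmod (l - c) <= b)%R.
Proof.
  rewrite filterlim_C_Cmod. intros Hu Hb.
  destruct (Rle_or_lt (Cmod (l - c)) b) as [|Hlt]; [assumption|exfalso].
  assert (He : (0 < Cmod (l - c) - b)%R) by lra.
  destruct (Hu (mkposreal _ He)) as [N HN]. specialize (HN N (le_n N)). specialize (Hb N).
  simpl in HN.
  assert (Cmod (l - c) <= Cmod (u N - l) + Cmod (u N - c))%R.
  { replace (l - c) with (- (u N - l) + (u N - c)) by ring.
    rewrite <- (Cmod_opp (u N - l)). apply Cmod_triangle. }
  lra.
Qed.

Lemma filterlim_C_div_1 (x y : nat -> C) (K s : R) : (0 <= s < 1)%R ->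
  (forall n, (Cmod (x n - 1) <= K * s ^ n)%R) -> (forall n, (Cmod (y n - 1) <= K * s ^ n)%R) ->
  filterlim (fun n => x n / y n) eventually (locally (1 : C)).
Proof.
  intros Hs Hx Hy. apply filterlim_C_Cmod. intros eps.
  assert (Heps' : (0 < Rmin 2 eps)%R) by (apply Rmin_glb_lt; [lra | apply cond_pos]).
  destruct (geom_tail_lt s (4 * K) (mkposreal _ Heps') Hs) as [N HN].
  exists N. intros n Hn. specialize (HN n Hn). simpl in HN.
  pose proof (Rmin_l 2 eps). pose proof (Rmin_r 2 eps).
  specialize (Hx n). specialize (Hy n).
  assert (Hyn : (1 / 2 <= Cmod (y n))%R).
  { assert (Cmod 1 <= Cmod (- (y n - 1)) + Cmod (y n))%R.
    { replace (1 : C) with (- (y n - 1) + y n) at 1 by ring. apply Cmod_triangle. }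
    rewrite Cmod_opp, Cmod_1 in *. lra. }
  assert (Hy0 : y n <> 0).
  { intros E. rewrite E, Cmod_0 in Hyn. lra. }
  assert (Hxy : (Cmod (x n - y n) <= 2 * K * s ^ n)%R).
  { replace (x n - y n) with ((x n - 1) + - (y n - 1)) by ring.
    eapply Rle_trans; [apply Cmod_triangle|]. rewrite Cmod_opp. lra. }
  replace (x n / y n - 1) with ((x n - y n) / y n) by (field; exact Hy0).
  rewrite Cmod_div by exact Hy0.
  apply Rle_lt_trans with (4 * K * s ^ n)%R; [|lra].
  apply Rle_trans with (Cmod (x n - y n) * 2)%R.
  - unfold Rdiv. apply Rmult_le_compat_l; [apply Cmod_ge_0|].
    rewrite <- (Rinv_inv 2). apply Rinv_le_contravar; lra.
  - lra.
Qed.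

Lemma qpoch_S (a q : C) n : qpoch a q (S n) = qpoch a q n * (1 - a * pow_n q n).
Proof. reflexivity. Qed.

Lemma qpoch_add (a q : C) k n : qpoch a q (k + n) = qpoch a q k * qpoch (a * pow_n q k) q n.
Proof.
  induction n as [|n IH].
  - rewrite Nat.add_0_r. simpl. ring.
  - rewrite Nat.add_succ_r, !qpoch_S, IH, pow_n_add. ring.
Qed.

Lemma Cmod_qpoch_le (a q : C) n : (Cmod q < 1)%R ->
  (Cmod (qpoch a q n) <= exp (Cmod a / (1 - Cmod q)))%R.
Proof.
  intros Hq. pose proof (Cmod_ge_0 q). pose proof (Cmod_ge_0 a).
  (* 1 + x <= exp x turns the product into the exponential of a geometric sum *)
  assert (Hgeom : forall k,
    (Cmod (qpoch a q k) <= exp (Cmod a * (1 - Cmod q ^ k) / (1 - Cmod q)))%R).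
  { induction k as [|k IH].
    - simpl. rewrite Cmod_1, Rminus_diag, Rmult_0_r, Rdiv_0_l, exp_0. lra.
    - rewrite qpoch_S, Cmod_mult.
      assert (Hfactor : (Cmod (1 - a * pow_n q k) <= exp (Cmod a * Cmod q ^ k))%R).
      { eapply Rle_trans; [apply Cmod_triangle|].
        rewrite Cmod_1, Cmod_opp, Cmod_mult, Cmod_pow_n. apply exp_ineq1_le. }
      eapply Rle_trans; [apply Rmult_le_compat; [apply Cmod_ge_0 | apply Cmod_ge_0 | exact IH |
                                                  exact Hfactor]|].
      rewrite <- exp_plus. right. f_equal. simpl. field. lra. }
  eapply Rle_trans; [apply Hgeom|]. apply exp_le_exp.
  unfold Rdiv. apply Rmult_le_compat_r; [apply Rlt_le, Rinv_0_lt_compat; lra|].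
  pose proof (pow_le (Cmod q) n H). nra.
Qed.

Lemma Cmod_qpoch_sub_le (a q : C) N n : (Cmod q < 1)%R -> (N <= n)%nat ->
  (Cmod (qpoch a q n - qpoch a q N) <=
     exp (Cmod a / (1 - Cmod q)) * Cmod a * Cmod q ^ N / (1 - Cmod q))%R.
Proof.
  intros Hq HNn. set (E := exp (Cmod a / (1 - Cmod q))).
  pose proof (Cmod_ge_0 q). pose proof (Cmod_ge_0 a). assert (HE : (0 < E)%R) by apply exp_pos.
  assert (Hgeom : forall j, (Cmod (qpoch a q (N + j) - qpoch a q N) <=
                    E * Cmod a * Cmod q ^ N * (1 - Cmod q ^ j) / (1 - Cmod q))%R).
  { induction j as [|j IH].
    - rewrite Nat.add_0_r. unfold Cminus. rewrite Cplus_opp_r, Cmod_0. simpl.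
      right. field. lra.
    - rewrite Nat.add_succ_r, qpoch_S.
      replace (qpoch a q (N + j) * (1 - a * pow_n q (N + j)) - qpoch a q N) with
        ((qpoch a q (N + j) - qpoch a q N) + - (qpoch a q (N + j) * a * pow_n q (N + j)))
        by ring.
      eapply Rle_trans; [apply Cmod_triangle|].
      rewrite Cmod_opp, !Cmod_mult, Cmod_pow_n.
      pose proof (Cmod_qpoch_le a q (N + j) Hq) as Hbd. fold E in Hbd.
      pose proof (pow_le (Cmod q) (N + j) H) as Hpow.
      apply Rle_trans with (E * Cmod a * Cmod q ^ N * (1 - Cmod q ^ j) / (1 - Cmod q)
                            + E * Cmod a * Cmod q ^ (N + j))%R.
      + apply Rplus_le_compat; [exact IH|].
        apply Rmult_le_compat_r; [exact Hpow|]. now apply Rmult_le_compat_r.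
      + right. rewrite pow_add. simpl. field. lra. }
  replace n with (N + (n - N))%nat by lia. eapply Rle_trans; [apply Hgeom|].
  unfold Rdiv. apply Rmult_le_compat_r; [apply Rlt_le, Rinv_0_lt_compat; lra|].
  pose proof (pow_le (Cmod q) N H). pose proof (pow_le (Cmod q) (n - N) H).
  assert (0 <= E * Cmod a * Cmod q ^ N)%R by (apply Rmult_le_pos; nra). nra.
Qed.

Lemma qpoch_neq_0 (a q : C) n : (Cmod a < 1)%R -> (Cmod q < 1)%R -> qpoch a q n <> 0.
Proof.
  intros Ha Hq. induction n as [|n IH].
  - apply C1_nz.
  - rewrite qpoch_S. apply Cmult_neq_0; [exact IH|]. apply Cminus_1_neq_0.
    rewrite Cmod_mult, Cmod_pow_n. pose proof (Cmod_ge_0 q).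
    assert (Cmod q ^ n <= 1)%R by (apply (pow_le_pow_of_le_1 _ 0); [lra | lia]).
    pose proof (pow_le (Cmod q) n H). pose proof (Cmod_ge_0 a). nra.
Qed.

Lemma qpinf_unique (a q l : C) :
  filterlim (qpoch a q) eventually (locally l) -> qpinf a q = l.
Proof. intros Hl. unfold qpinf. now rewrite <- (filterlim_C_components _ _ Hl). Qed.

Lemma qpoch_cvg (a q : C) : (Cmod q < 1)%R ->
  filterlim (qpoch a q) eventually (locally (qpinf a q)).
Proof.
  intros Hq. set (K := (exp (Cmod a / (1 - Cmod q)) * Cmod a / (1 - Cmod q))%R).
  destruct (filterlim_C_cauchy (qpoch a q)) as [l Hl].
  - intros eps. pose proof (Cmod_ge_0 q).
    destruct (geom_tail_lt (Cmod q) (2 * K) eps) as [N HN]; [lra|].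
    exists N. intros n p Hn Hp.
    replace (qpoch a q n - qpoch a q p) with
      ((qpoch a q n - qpoch a q N) + - (qpoch a q p - qpoch a q N)) by ring.
    eapply Rle_lt_trans; [apply Cmod_triangle|]. rewrite Cmod_opp.
    pose proof (Cmod_qpoch_sub_le a q N n Hq Hn). pose proof (Cmod_qpoch_sub_le a q N p Hq Hp).
    specialize (HN N (le_n N)). unfold K in *. lra.
  - now rewrite (qpinf_unique _ _ _ Hl).
Qed.

Lemma qpinf_shift (a q : C) k : (Cmod q < 1)%R ->
  qpinf a q = qpoch a q k * qpinf (a * pow_n q k) q.
Proof.
  intros Hq. apply qpinf_unique, (filterlim_C_shift _ _ k).
  apply (filterlim_ext (fun n => qpoch a q k * qpoch (a * pow_n q k) q n)).
  - intros n. now rewrite qpoch_add.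
  - now apply filterlim_C_scal, qpoch_cvg.
Qed.

Lemma qpinf_S (a q : C) : (Cmod q < 1)%R -> qpinf a q = (1 - a) * qpinf (a * q) q.
Proof.
  intros Hq. rewrite (qpinf_shift a q 1 Hq), pow_n_1. f_equal.
  simpl. change (one : C_Ring) with (1 : C). ring.
Qed.

Lemma qpinf_sub_1_bound (q : C) : (Cmod q < 1)%R ->
  exists K, (0 <= K)%R /\
    forall a, (Cmod a <= 1)%R -> (Cmod (qpinf a q - 1) <= K * Cmod a)%R.
Proof.
  intros Hq. pose proof (Cmod_ge_0 q).
  exists (exp (1 / (1 - Cmod q)) / (1 - Cmod q))%R. split.
  { apply Rlt_le, Rdiv_lt_0_compat; [apply exp_pos | lra]. }
  intros a Ha. pose proof (Cmod_ge_0 a).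
  apply (filterlim_C_Cmod_le _ _ _ _ (qpoch_cvg a q Hq)). intros n.
  change (1 : C) with (qpoch a q 0).
  eapply Rle_trans; [apply (Cmod_qpoch_sub_le a q 0 n Hq); lia|]. simpl.
  assert (Hexp : (exp (Cmod a / (1 - Cmod q)) <= exp (1 / (1 - Cmod q)))%R).
  { apply exp_le_exp. unfold Rdiv.
    apply Rmult_le_compat_r; [apply Rlt_le, Rinv_0_lt_compat; lra | exact Ha]. }
  set (X := exp (Cmod a / (1 - Cmod q))) in *. set (Y := exp (1 / (1 - Cmod q))) in *.
  assert (HZ : (0 < / (1 - Cmod q))%R) by (apply Rinv_0_lt_compat; lra).
  assert (X * Cmod a <= Y * Cmod a)%R by (apply Rmult_le_compat_r; assumption).
  unfold Rdiv. rewrite Rmult_1_r. nra.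
Qed.

Lemma qpinf_neq_0 (a q : C) : (Cmod a < 1)%R -> (Cmod q < 1)%R -> qpinf a q <> 0.
Proof.
  intros Ha Hq. pose proof (Cmod_ge_0 q). pose proof (Cmod_ge_0 a).
  destruct (qpinf_sub_1_bound q Hq) as [K [_ HK]].
  (* far enough in the product, the tail (a q^k; q)_oo is within distance 1 of 1 *)
  destruct (geom_tail_lt (Cmod q) (K * Cmod a) (mkposreal 1 Rlt_0_1)) as [k Hk]; [lra|].
  specialize (Hk k (le_n k)). simpl in Hk.
  assert (Hak : (Cmod (a * pow_n q k) <= Cmod a * Cmod q ^ k)%R)
    by (rewrite Cmod_mult, Cmod_pow_n; lra).
  assert (Hqk : (Cmod q ^ k <= 1)%R) by (apply (pow_le_pow_of_le_1 _ 0); [lra | lia]).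
  pose proof (pow_le (Cmod q) k H).
  pose proof (HK (a * pow_n q k) ltac:(nra)) as Htail.
  rewrite (qpinf_shift a q k Hq). apply Cmult_neq_0; [now apply qpoch_neq_0|].
  intros E. rewrite E in Htail. replace (0 - 1) with (- (1)) in Htail by ring.
  rewrite Cmod_m1, Cmod_mult, Cmod_pow_n in Htail. nra.
Qed.

Definition cor7_ratio (m : nat) (q : C) (n : nat) : C :=
  qpinf (pow_n q (m * n)) (pow_n q m) / qpinf (pow_n q n) q.

Section Telescoping.

Variables (m : nat) (q : C).
Hypotheses (Hm : (1 <= m)%nat) (Hq : (Cmod q < 1)%R).

Lemma cor7_term_telescopes n : (1 <= n)%nat ->
  cor7_term m q n = cor7_ratio m q n - cor7_ratio m q (S n).
Proof.
  intros Hn. unfold cor7_term, cor7_ratio.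
  set (u := pow_n q n). set (v := pow_n q ((m - 1) * n)).
  set (c := qpoch (pow_n q (n + 1)) q ((m - 1) * n)).
  set (A := qpinf (pow_n q (m * S n)) (pow_n q m)).
  set (D := qpinf (pow_n q (m * n + 1)) q).
  assert (Huv : pow_n q (m * n) = u * v).
  { unfold u, v. rewrite <- pow_n_add. f_equal. destruct m; lia. }
  assert (HA : qpinf (pow_n q (m * n)) (pow_n q m) = (1 - u * v) * A).
  { rewrite (qpinf_S _ _ (Cmod_pow_n_lt_1 q m Hq Hm)), <- Huv, <- pow_n_add.
    unfold A. do 3 f_equal. lia. }
  assert (HDn : qpinf u q = (1 - u) * qpinf (pow_n q (S n)) q).
  { rewrite (qpinf_S _ _ Hq). unfold u. now rewrite (Cmult_comm (pow_n q n) q). }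
  assert (HDSn : qpinf (pow_n q (S n)) q = c * D).
  { rewrite (qpinf_shift _ _ ((m - 1) * n) Hq). unfold c, D.
    replace (S n) with (n + 1)%nat by lia. do 2 f_equal. rewrite <- pow_n_add. f_equal.
    destruct m; lia. }
  assert (HDmn : qpinf (pow_n q (m * n)) q = (1 - u * v) * D).
  { rewrite (qpinf_S _ _ Hq), Huv. unfold D. now rewrite pow_n_add, pow_n_1, <- Huv. }
  assert (Hu : 1 - u <> 0) by now apply Cminus_1_neq_0, Cmod_pow_n_lt_1.
  assert (Huv1 : 1 - u * v <> 0)
    by (rewrite <- Huv; apply Cminus_1_neq_0, Cmod_pow_n_lt_1; [exact Hq | nia]).
  assert (Hc : c <> 0) by (apply qpoch_neq_0; [apply Cmod_pow_n_lt_1; [exact Hq | lia] | exact Hq]).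
  assert (HD : D <> 0) by (apply qpinf_neq_0; [apply Cmod_pow_n_lt_1; [exact Hq | lia] | exact Hq]).
  rewrite HA, HDmn, HDn, HDSn. fold A. field. repeat split; assumption.
Qed.

Lemma sum_cor7_term N :
  sum_n (fun n => cor7_term m q (S n)) N = cor7_ratio m q 1 - cor7_ratio m q (S (S N)).
Proof.
  induction N as [|N IH].
  - rewrite sum_O. apply cor7_term_telescopes; lia.
  - rewrite sum_Sn, IH, (cor7_term_telescopes (S (S N))) by lia.
    change plus with Cplus. match goal with |- ?a = ?b => change (@eq C a b) end. ring.
Qed.

Lemma cor7_ratio_cvg : filterlim (cor7_ratio m q) eventually (locally (1 : C)).
Proof.
  pose proof (Cmod_ge_0 q).
  destruct (qpinf_sub_1_bound (pow_n q m) (Cmod_pow_n_lt_1 q m Hq Hm)) as [K1 [HK1 Hnum]].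
  destruct (qpinf_sub_1_bound q Hq) as [K2 [HK2 Hden]].
  assert (Hs : (0 <= Cmod q <= 1)%R) by lra.
  apply (filterlim_C_div_1 _ _ (K1 + K2) (Cmod q)); [lra | intros n ..].
  - assert (Hmn : (Cmod (pow_n q (m * n)) <= Cmod q ^ n)%R).
    { rewrite Cmod_pow_n. apply pow_le_pow_of_le_1; [exact Hs | nia]. }
    assert (Hmn1 : (Cmod (pow_n q (m * n)) <= 1)%R).
    { rewrite Cmod_pow_n. apply (pow_le_pow_of_le_1 _ 0); [exact Hs | lia]. }
    eapply Rle_trans; [apply Hnum; exact Hmn1|].
    pose proof (Cmod_ge_0 (pow_n q (m * n))). nra.
  - assert (Hn1 : (Cmod (pow_n q n) <= 1)%R).
    { rewrite Cmod_pow_n. apply (pow_le_pow_of_le_1 _ 0); [exact Hs | lia]. }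
    eapply Rle_trans; [apply Hden; exact Hn1|]. rewrite Cmod_pow_n.
    pose proof (pow_le (Cmod q) n H). nra.
Qed.

Lemma cor7_ratio_1 :
  cor7_ratio m q 1 = qpinf (pow_n q m) (pow_n q m) / qpinf q q.
Proof. unfold cor7_ratio. now rewrite Nat.mul_1_r, pow_n_1. Qed.

End Telescoping.

Theorem corollary7 (m : nat) (q : C) :
  (2 <= m)%nat -> (Cmod q < 1)%R ->
  is_series (fun n : nat => cor7_term m q (S n))
    (Cplus (Copp 1%C) (Cdiv (qpinf (pow_n q m) (pow_n q m)) (qpinf q q))).
Proof.
  intros Hm Hq. assert (Hm1 : (1 <= m)%nat) by lia.
  unfold is_series. apply filterlim_C_Cmod. intros eps.
  destruct (proj1 (filterlim_C_Cmod _ _) (cor7_ratio_cvg m q Hm1 Hq) eps) as [N HN].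
  exists N. intros n Hn.
  rewrite (sum_cor7_term m q Hm1 Hq), <- (cor7_ratio_1 m q).
  replace (cor7_ratio m q 1 - cor7_ratio m q (S (S n)) - (- (1) + cor7_ratio m q 1))
    with (- (cor7_ratio m q (S (S n)) - 1)) by ring.
  rewrite Cmod_opp. apply HN. lia.
Qed.
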